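(* Let $G$ be a finite cyclic group and $S$ a nonempty subset of $G$ such that $\Gamma=\mathrm{Cay}(G,S)$ is a connected arc-transitive normal Cayley digraph. Then every element of $S$ generates $G$, and $\mathrm{Aut}(G,S)$ acts regularly on $S$.
   Context: The Cayley digraph $\mathrm{Cay}(G,S)$ has vertex set $G$, with $x$ pointing to $y$ iff $yx^{-1}\in S$. For $g\in G$, $\widehat g$ is the permutation $x\mapsto xg$ of $G$, and $\widehat G=\{\widehat g: g\in G\}\leqslant\mathrm{Aut}(\mathrm{Cay}(G,S))$. The Cayley digraph is normal if $\widehat G$ is normal in $\mathrm{Aut}(\mathrm{Cay}(G,S))$. $\mathrm{Aut}(G,S)=\{\alpha\in\mathrm{Aut}(G): S^\alpha=S\}$. A digraph is connected if its underlying undirected graph is connected and arc-transitive if its automorphism group is transitive on its arcs. *)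

From mathcomp Require Import all_boot all_fingroup.
Set Implicit Arguments. Unset Strict Implicit. Unset Printing Implicit Defensive.
Local Open Scope group_scope.

(* The group G is the whole finGroupType gT (vertex set of Cay(G,S)). *)
Section Cayley.
Variable gT : finGroupType.

Definition cay_arc (S : {set gT}) (x y : gT) : bool := y * x^-1 \in S.

Definition rmul_perm (g : gT) : {perm gT} := perm (mulIg g).

Definition hatG : {set {perm gT}} := [set rmul_perm g | g : gT].

Definition AutCay (S : {set gT}) : {set {perm gT}} :=
  [set p : {perm gT} | [forall x, forall y, cay_arc S (p x) (p y) == cay_arc S x y]].

Definition normal_cayley (S : {set gT}) : Prop := hatG <| AutCay S.

Definition cay_connected (S : {set gT}) : Prop :=
  forall x y : gT, connect (fun u v => cay_arc S u v || cay_arc S v u) x y.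

Definition arc_transitive (S : {set gT}) : Prop :=
  forall x y x' y' : gT, cay_arc S x y -> cay_arc S x' y' ->
    exists2 p, p \in AutCay S & (p x = x' /\ p y = y').

Definition AutGS (S : {set gT}) : {set {perm gT}} :=
  [set a in Aut [set: gT] | a @: S == S].

Definition acts_regularly (A : {set {perm gT}}) (S : {set gT}) : Prop :=
  {in A, forall a : {perm gT}, a @: S = S} /\
  forall s t, s \in S -> t \in S -> exists! a, a \in A /\ a s = t.
End Cayley.

From mathcomp Require Import all_boot all_fingroup all_solvable.
Local Open Scope group_scope.
Set Implicit Arguments. Unset Strict Implicit. Unset Printing Implicit Defensive.

(* Normality of Cay(G,S) makes the stabiliser of 1 in Aut(Cay(G,S)) consist of
   group automorphisms fixing S, so arc-transitivity makes Aut(G,S) transitive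
   on S.  Every subgroup of a cyclic group is characteristic, so s and its
   images under Aut(G,S) all lie in <[s]>; connectivity says S generates G,
   hence <[s]> = G.  An automorphism is determined by the image of a generator,
   which gives the uniqueness in the regularity of Aut(G,S) on S. *)

Section CayleyDigraph.
Variables (gT : finGroupType) (S : {set gT}).

Lemma cay_arc1 s : cay_arc S 1 s = (s \in S).
Proof. by rewrite /cay_arc invg1 mulg1. Qed.

Lemma AutGSP a : reflect (a \in Aut [set: gT] /\ a @: S = S) (a \in AutGS S).
Proof. by apply: (iffP setIdP) => -[-> /eqP]. Qed.

Lemma cay_connected_gen : cay_connected S -> <<S>> = [set: gT].
Proof.
move=> connS; apply/setP=> x; rewrite inE.
have closedS : closed (fun u v => cay_arc S u v || cay_arc S v u) (mem <<S>>).
  have memS u v : cay_arc S u v -> (u \in <<S>>) = (v \in <<S>>).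
    by move=> /mem_gen Suv; rewrite -[v](mulgKV u) groupMl.
  by move=> u v /orP[/memS | /memS ->].
by rewrite -(closed_connect closedS (connS 1 x)) group1.
Qed.

Section NormalCayley.
Hypothesis normalS : normal_cayley S.

(* p normalises hatG, so p \o rmul_perm g \o p^-1 is right multiplication by
   some h, and evaluating at 1 gives h = p g. *)
Lemma normal_cayley_fix1_morph p : p \in AutCay S -> p 1 = 1 ->
  {morph p : x y / x * y}.
Proof.
move=> Ap p1 x g; have [_ /subsetP/(_ p Ap)/normP nHp] := andP normalS.
have : rmul_perm g ^ p \in hatG gT.
  by rewrite -nHp memJ_conjg; apply/imsetP; exists g.
case/imsetP=> h _ gpE.
have pMg y : p (y * g) = p y * h.
  have := congr1 (fun q : {perm gT} => q (p y)) gpE.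
  by rewrite /= /conjg !permM permK /rmul_perm !permE.
by rewrite !pMg -[g]mul1g pMg p1 mul1g.
Qed.

Lemma normal_cayley_fix1_Aut p : p \in AutCay S -> p 1 = 1 ->
  p \in Aut [set: gT].
Proof.
move=> Ap p1; rewrite inE; apply/andP; split.
  by apply/subsetP=> z _; apply: in_setT.
by apply/morphicP=> x y _ _; apply: normal_cayley_fix1_morph.
Qed.

End NormalCayley.

Lemma AutCay_fix1_stable p : p \in AutCay S -> p 1 = 1 -> p @: S = S.
Proof.
move=> Ap p1; apply/eqP; rewrite eqEcard (card_imset _ (@perm_inj _ p)) leqnn.
rewrite andbT; apply/subsetP=> _ /imsetP[u Su ->].
move: Ap; rewrite inE => /forallP/(_ 1)/forallP/(_ u)/eqP.
by rewrite p1 !cay_arc1 Su => ->.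
Qed.

Lemma AutGS_transitive : normal_cayley S -> arc_transitive S ->
  forall s t, s \in S -> t \in S -> exists2 a, a \in AutGS S & a s = t.
Proof.
move=> normalS arcS s t Ss St.
rewrite -cay_arc1 in Ss; rewrite -cay_arc1 in St.
have [p Ap [p1 ps]] := arcS _ _ _ _ Ss St.
by exists p => //; apply/AutGSP; split;
  [apply: normal_cayley_fix1_Aut | apply: AutCay_fix1_stable].
Qed.

End CayleyDigraph.

Section CyclicAutomorphisms.
Variable gT : finGroupType.

Lemma Aut_cyclic_mem_cycle (G : {group gT}) a x :
  cyclic G -> a \in Aut G -> x \in G -> a x \in <[x]>.
Proof.
move=> cycG AutGa Gx.
have /andP[_ /forall_inP/(_ a AutGa)/subsetP] : <[x]> \char G.
  by rewrite sub_cyclic_char // cycle_subG.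
by apply; apply: imset_f; apply: cycle_id.
Qed.

Lemma eq_Aut_generator (G : {group gT}) x a b :
  <[x]> = G -> a \in Aut G -> b \in Aut G -> a x = b x -> a = b.
Proof.
move=> genG AutGa AutGb abx; apply: (eq_Aut AutGa AutGb) => y.
have Gx : x \in G by rewrite -genG cycle_id.
rewrite -genG => /cycleP[n ->].
by rewrite -(autmE AutGa) -(autmE AutGb) !morphX //; congr (_ ^+ n).
Qed.

End CyclicAutomorphisms.

Theorem lemma3p2 (gT : finGroupType) (S : {set gT}) :
  cyclic [set: gT] -> S != set0 ->
  cay_connected S -> arc_transitive S -> normal_cayley S ->
  (forall s, s \in S -> <[s]> = [set: gT]) /\ acts_regularly (AutGS S) S.
Proof.
move=> cycG _ connS arcS normalS.
have transS := AutGS_transitive normalS arcS.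
have genS s : s \in S -> <[s]> = [set: gT].
  move=> Ss; apply/eqP; rewrite eqEsubset subsetT -(cay_connected_gen connS).
  rewrite gen_subG; apply/subsetP=> t St.
  have [a /AutGSP[AutGa _] <-] := transS s t Ss St.
  exact: Aut_cyclic_mem_cycle cycG AutGa (in_setT s).
split=> //; split=> [a /AutGSP[] // | s t Ss St].
have [a AutSa ast] := transS s t Ss St.
exists a; split=> // b [AutSb bst].
have [/AutGSP[AutGa _] /AutGSP[AutGb _]] := (AutSa, AutSb).
by apply: (eq_Aut_generator (genS s Ss)) => //; rewrite ast bst.
Qed.
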